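(* Let $r \ge 3$ and $n \ge \frac{1}{3} r^4$. Let $\mathcal{H}$ be an intersecting $r$-uniform $n$-vertex hypergraph with $\delta_{r-1}^+(\mathcal{H}) \ge 2$ having the maximum number of hyperedges among all intersecting $r$-uniform $n$-vertex hypergraphs with minimum positive co-degree at least $2$. Then $\mathcal{H}$ is a $2$-kernel system.
   Context: A hypergraph is intersecting if every two of its hyperedges share at least one vertex. For a non-empty $r$-uniform hypergraph $\mathcal{H}$, the minimum positive co-degree $\delta_{r-1}^+(\mathcal{H})$ is the largest integer $k$ such that every $(r-1)$-set of vertices that is contained in at least one hyperedge of $\mathcal{H}$ is contained in at least $k$ distinct hyperedges of $\mathcal{H}$; for the empty hypergraph it is $0$. Given integers $r \ge k \ge 1$, an $r$-uniform $k$-kernel system on vertex set $V$ is a hypergraph whose hyperedge set is $\{E \in \binom{V}{r} : |E \cap X| \ge k\}$ for some set $X \subseteq V$ with $|X| = 2k-1$. *)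

From mathcomp Require Import all_boot.
Set Implicit Arguments. Unset Strict Implicit. Unset Printing Implicit Defensive.

Section Hyper.
Variable n : nat.
Notation hgraph := {set {set 'I_n}}.

Definition uniform (r : nat) (H : hgraph) : bool :=
  [forall E in H, #|E| == r].

Definition intersecting (H : hgraph) : bool :=
  [forall E in H, forall F in H, E :&: F != set0].

Definition codeg (H : hgraph) (S : {set 'I_n}) : nat :=
  #|[set E in H | S \subset E]|.

(* minimum positive (r-1)-co-degree: for nonempty H, the minimum of codeg over
   the (r-1)-sets contained in at least one hyperedge (equivalently the largest
   k such that every such set lies in >= k hyperedges); 0 for the empty
   hypergraph.  #|H| is a harmless default for the min (every codeg <= #|H|). *)
Definition min_pos_codeg (r : nat) (H : hgraph) : nat :=
  if H == set0 then 0 else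
  \big[minn/#|H|]_(S : {set 'I_n} | (#|S| == r.-1) && [exists E in H, S \subset E])
     codeg H S.

Definition kernel_system (r k : nat) (H : hgraph) : Prop :=
  exists X : {set 'I_n}, #|X| = (2 * k).-1 /\
    H = [set E : {set 'I_n} | (#|E| == r) && (k <= #|E :&: X|)].
End Hyper.

From mathcomp Require Import all_boot zify.
Set Implicit Arguments. Unset Strict Implicit. Unset Printing Implicit Defensive.

(* The co-degree condition yields an exchange property: any vertex of an edge
   can be swapped for a vertex outside it.  Kernel systems on 3-sets are
   competitors, so by maximality |H| >= 'C(n-2, r-2) + 2 'C(n-3, r-2).
   Sizes of links are bounded by a branching argument: if every member of
   the link of t meets a small set B disjoint from t, the link of t is at
   most |B| times the largest link of a set x |: t.  This gives, in turn,
   - a vertex cover {a, b} of H (otherwise |H| <= r^3 'C(n-3, r-3), too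
     small);
   - either a third vertex c lying in every edge through a that misses b, in
     which case H is contained in, hence equal to, the kernel system on
     {a, b, c}; or else few edges through exactly one of a and b (at most
     (r-1)^2 'C(n-3, r-3) each), again making H too small. *)

Lemma card_bigcup_le (I T : finType) (P : pred I) (A : I -> {set T}) :
  #|\bigcup_(i | P i) A i| <= \sum_(i | P i) #|A i|.
Proof.
apply: (big_ind2 (fun (U : {set T}) m => #|U| <= m)) => //; first by rewrite cards0.
move=> U1 m1 U2 m2 h1 h2; rewrite cardsU (leq_trans (leq_subr _ _)) //.
exact: leq_add.
Qed.

Section FamilyCounting.
Variable T : finType.
Implicit Types (G : {set {set T}}) (t u B : {set T}).

Definition link G t : {set {set T}} := [set F in G | t \subset F].

Lemma link0 G : link G set0 = G.
Proof. by apply/setP => F; rewrite inE sub0set andbT. Qed.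

Definition through t u k : {set {set T}} :=
  [set E : {set T} | [&& #|E| == k, t \subset E & [disjoint E & u]]].

(* Such a k-set is t together with a (k - |t|)-subset of the complement of
   t and u, so the family is counted by a binomial coefficient. *)
Lemma card_through t u k : [disjoint t & u] -> #|t| <= k ->
  #|through t u k| = 'C(#|T| - #|t| - #|u|, k - #|t|).
Proof.
move=> dtu tk; set D := ~: (t :|: u).
have cD : #|D| = #|T| - #|t| - #|u|.
  by rewrite cardsCs setCK cardsU disjoint_setI0 // cards0 subn0 subnDA.
have dDt : [disjoint D & t] by rewrite disjoints_subset setCS subsetUl.
have dDu : [disjoint D & u] by rewrite disjoints_subset setCS subsetUr.
have -> : through t u k =
    (fun B => B :|: t) @: [set B : {set T} | B \subset D & #|B| == k - #|t|].
  apply/setP => E; rewrite inE; apply/and3P/imsetP => [[/eqP cE tE dEu] | [B]].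
  - exists (E :\: t); last by rewrite setUC -{1}(setID E t) (setIidPr tE).
    rewrite inE cardsD (setIidPr tE) cE eqxx andbT /D setCU subsetI subsetDr /=.
    by apply: subset_trans (subsetDl _ _) _; rewrite -disjoints_subset.
  rewrite inE => /andP [BD /eqP cB] ->.
  have dBt : [disjoint B & t] by apply: disjointWl dDt.
  rewrite cardsU disjoint_setI0 // cards0 subn0 cB subnK // subsetUr.
  by rewrite disjoints_subset subUset -!disjoints_subset dtu (disjointWl BD dDu).
rewrite card_in_imset ?cards_draws ?cD // => B1 B2; rewrite !inE.
move=> /andP [B1D _] /andP [B2D _] /(congr1 (fun A => A :&: D)).
by rewrite !setIUl (setIidPl B1D) (setIidPl B2D) setIC disjoint_setI0 ?setU0.
Qed.

Lemma cards3 (x y z : T) : x != y -> x != z -> y != z -> #|[set x; y; z]| = 3.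
Proof. by move=> xy xz yz; rewrite -setUA cardsU1 cards2 yz !inE negb_or xy xz. Qed.

Lemma disjoint_set0 t : [disjoint t & set0].
Proof. by rewrite disjoint_sym; apply: eq_disjoint0 => x; rewrite inE. Qed.

Lemma through_nonempty t u k : [disjoint t & u] -> #|t| <= k -> k + #|u| <= #|T| ->
  exists E, E \in through t u k.
Proof.
move=> dtu tk kT; apply/card_gt0P; rewrite card_through // bin_gt0; lia.
Qed.

Lemma card_link_uniform G t k : (forall E, E \in G -> #|E| = k) -> #|t| <= k ->
  #|link G t| <= 'C(#|T| - #|t|, k - #|t|).
Proof.
move=> unifG tk; rewrite -[#|T| - _](subn0 _) -(cards0 T) -card_through ?disjoint_set0 //.
apply/subset_leq_card/subsetP => F; rewrite !inE => /andP [FG tF].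
by rewrite unifG // eqxx tF disjoint_set0.
Qed.

Lemma link_split G t B :
  (forall F, F \in G -> t \subset F -> exists2 x, x \in B & x \in F) ->
  #|link G t| <= \sum_(x in B) #|link G (x |: t)|.
Proof.
move=> meetB; apply: (leq_trans _ (card_bigcup_le (fun x => x \in B) _)).
apply/subset_leq_card/subsetP => F; rewrite inE => /andP [FG tF].
have [x xB xF] := meetB F FG tF; apply/bigcupP; exists x => //.
by rewrite inE FG subUset sub1set xF tF.
Qed.

(* Counting by a branching tree: if, starting from t0, every set t of size
   below d has a "blocking" set B of size at most m, disjoint from t and met
   by every member of the link of t, then growing t one vertex at a time
   bounds the link of t by m^(d - |t|) times the largest link of a d-set. *)
Section BranchingBound.
Variables (G : {set {set T}}) (t0 : {set T}) (d m c : nat).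
Hypothesis blocker : forall t, t0 \subset t -> #|t| < d ->
  exists B : {set T}, [/\ #|B| <= m, [disjoint B & t] &
                forall F, F \in G -> t \subset F -> exists2 x, x \in B & x \in F].
Hypothesis leaf : forall t, #|t| = d -> #|link G t| <= c.

Lemma link_branching t : t0 \subset t -> #|t| <= d ->
  #|link G t| <= m ^ (d - #|t|) * c.
Proof.
move Hk : (d - #|t|) => k; elim: k t Hk => [|k IH] t Hk t0t td.
  by rewrite mul1n leaf //; lia.
have td' : #|t| < d by lia.
have [B [cB dBt meetB]] := blocker t0t td'.
apply: leq_trans (link_split meetB) _.
apply: (@leq_trans (\sum_(x in B) m ^ k * c)).
  apply: leq_sum => x xB.
  have xt : x \notin t by rewrite (disjointFr dBt xB).
  have cxt : #|x |: t| = #|t|.+1 by rewrite cardsU1 xt.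
  by apply: IH; rewrite ?cxt ?(subset_trans t0t (subsetUr _ _)) //; lia.
by rewrite sum_nat_const expnS -mulnA leq_mul2r cB orbT.
Qed.
End BranchingBound.

End FamilyCounting.

Lemma bigmin_le (I : finType) (P : pred I) (F : I -> nat) x j :
  P j -> \big[minn/x]_(i | P i) F i <= F j.
Proof.
move=> Pj; rewrite -big_filter; have : j \in [seq i <- index_enum I | P i].
  by rewrite mem_filter Pj mem_index_enum.
elim: [seq i <- _ | _] => [//|a s IH]; rewrite big_cons inE => /predU1P [<-|js].
  exact: geq_minl.
exact: leq_trans (geq_minr _ _) (IH js).
Qed.

Section CoDegree.
Variables (n r : nat).
Implicit Types (H : {set {set 'I_n}}) (S E : {set 'I_n}).

Lemma min_pos_codeg_ge2P H : 0 < r -> uniform r H ->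
  2 <= min_pos_codeg r H <->
  H != set0 /\ (forall S E, E \in H -> S \subset E -> #|S| = r.-1 -> 2 <= codeg H S).
Proof.
move=> r_gt0 unifH; rewrite /min_pos_codeg; split.
  case: ifP => // /negbT H_neq0 hmin; split => // S E EH SE cS.
  apply: leq_trans hmin (bigmin_le _ _ _); rewrite cS eqxx /=.
  by apply/exists_inP; exists E.
case=> H_neq0 hcod; rewrite (negbTE H_neq0).
have [E EH] := set0Pn _ H_neq0.
have cE : #|E| = r := eqP (forall_inP unifH E EH).
have [v vE] : exists v, v \in E by apply/card_gt0P; rewrite cE.
have cS : #|E :\ v| = r.-1 by move: (cardsD1 v E); rewrite vE cE; lia.
apply: (big_ind (fun m => 2 <= m)).
- apply: leq_trans (hcod _ _ EH (subsetDl _ _) cS) _.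
  by apply/subset_leq_card/subsetP => F; rewrite inE => /andP [].
- by move=> a b ha hb; rewrite leq_min ha hb.
- by move=> S /andP [/eqP cS' /exists_inP [F FH SF]]; apply: hcod FH SF cS'.
Qed.

Lemma codeg_extensions H S (A : {set 'I_n}) : [disjoint A & S] ->
  (forall u, u \in A -> u |: S \in H) -> #|A| <= codeg H S.
Proof.
move=> dAS ext; rewrite -(@card_in_imset _ _ (fun u => u |: S)).
  apply/subset_leq_card/subsetP => _ /imsetP [u uA ->].
  by rewrite inE ext // subsetUr.
move=> u v uA vA e; have : u \in v |: S by rewrite -e setU11.
by rewrite in_setU1 (disjointFr dAS uA) orbF => /eqP.
Qed.

Lemma exchange H E v : 0 < r -> uniform r H -> 2 <= min_pos_codeg r H ->
  E \in H -> v \in E -> exists2 u, u \notin E & u |: (E :\ v) \in H.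
Proof.
move=> r_gt0 unifH /(min_pos_codeg_ge2P r_gt0 unifH) [_ hcod] EH vE.
have cE F : F \in H -> #|F| = r by move=> FH; apply/eqP/(forall_inP unifH).
have cS : #|E :\ v| = r.-1 by move: (cardsD1 v E); rewrite vE cE //; lia.
have [F [FH SF FE]] : exists F, [/\ F \in H, E :\ v \subset F & F != E].
  have /card_gt1P [F1 [F2 [F1S F2S F12]]] := hcod _ _ EH (subsetDl _ _) cS.
  move: F1S F2S; rewrite !inE => /andP [F1H SF1] /andP [F2H SF2].
  case: (eqVneq F1 E) => [e1|neq]; last by exists F1.
  by exists F2; split; rewrite // -e1 eq_sym.
have /cards1P [u Fu] : #|F :\: (E :\ v)| == 1.
  by rewrite cardsD (setIidPr SF) (cE F FH) cS; apply/eqP; lia.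
have eF : F = u |: (E :\ v) by rewrite -Fu setUC -{1}(setID F (E :\ v)) (setIidPr SF).
have uS : u \notin E :\ v by move: (set11 u); rewrite -Fu inE => /andP [].
exists u; rewrite -?eF //; move: uS; rewrite !inE negb_and negbK => /orP [/eqP uv|//].
by move: FE; rewrite eF uv setD1K ?eqxx.
Qed.

End CoDegree.

Section KernelSystems.
Variables (n r : nat).
Implicit Types (X S E F : {set 'I_n}).

Definition kernel X : {set {set 'I_n}} :=
  [set E : {set 'I_n} | (#|E| == r) && (2 <= #|E :&: X|)].

Lemma kernel_uniform X : uniform r (kernel X).
Proof. by apply/forall_inP => E; rewrite inE => /andP []. Qed.

(* Two 2-subsets of a 3-set always meet. *)
Lemma kernel_intersecting X : #|X| = 3 -> intersecting (kernel X).
Proof.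
move=> cX; apply/forall_inP => E; rewrite inE => /andP [_ hE].
apply/forall_inP => F; rewrite inE => /andP [_ hF]; apply/negP => /eqP EF.
have : (E :&: X) :|: (F :&: X) \subset X by rewrite subUset !subsetIr.
move/subset_leq_card; rewrite cardsU cX setIACA setIid EF set0I cards0; lia.
Qed.

Lemma kernel_mem X E x y : #|E| = r -> x != y -> [set x; y] \subset E :&: X ->
  E \in kernel X.
Proof.
move=> cE xy sxy; rewrite inE cE eqxx /=.
by apply: leq_trans (subset_leq_card sxy); rewrite cards2 xy.
Qed.

(* An (r-1)-subset S of a kernel edge extends in at least two ways: by any
   vertex outside S if S already meets X twice, and otherwise by the (at
   least two) vertices of X outside S. *)
Lemma kernel_codeg X S E : 3 <= r -> r < n -> #|X| = 3 ->
  E \in kernel X -> S \subset E -> #|S| = r.-1 -> 2 <= codeg (kernel X) S.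
Proof.
move=> r3 rn cX; rewrite inE => /andP [/eqP cE EX] SE cS.
have SX_ge1 : 1 <= #|S :&: X|.
  have : E :&: X \subset (S :&: X) :|: (E :\: S).
    apply/subsetP => x; rewrite !inE => /andP [xE xX].
    by case: (x \in S); rewrite ?xX ?xE.
  move/subset_leq_card; rewrite cardsU cardsD (setIidPr SE) cE cS; lia.
case: (leqP 2 #|S :&: X|) => SX.
- apply: leq_trans (codeg_extensions (A := ~: S) _ _).
    by rewrite cardsCs setCK card_ord cS; lia.
  + by rewrite disjoints_subset.
  move=> u; rewrite inE => uS; rewrite inE cardsU1 uS cS.
  apply/andP; split; first by apply/eqP; lia.
  by apply: leq_trans SX _; apply/subset_leq_card/setSI/subsetUr.
- apply: leq_trans (codeg_extensions (A := X :\: S) _ _).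
    by rewrite cardsD cX setIC; lia.
  + by rewrite disjoints_subset subsetDr.
  move=> u; rewrite inE => /andP [uS uX]; rewrite inE cardsU1 uS cS.
  apply/andP; split; first by apply/eqP; lia.
  have : u |: (S :&: X) \subset (u |: S) :&: X.
    by rewrite subUset sub1set !inE eqxx uX setISS ?subsetUr.
  by move/subset_leq_card; rewrite cardsU1 inE (negbTE uS); lia.
Qed.

Lemma kernel_admissible X : 3 <= r -> r < n -> #|X| = 3 ->
  [/\ uniform r (kernel X), intersecting (kernel X) & 2 <= min_pos_codeg r (kernel X)].
Proof.
move=> r3 rn cX; split; [exact: kernel_uniform | exact: kernel_intersecting |].
apply/(min_pos_codeg_ge2P _ (kernel_uniform X)); first lia.
split; last by move=> S E EK SE cS; apply: kernel_codeg EK SE cS.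
have [E] : exists E, E \in through X set0 r.
  by apply: through_nonempty; rewrite ?disjoint_set0 // ?cards0 ?card_ord; lia.
rewrite inE => /and3P [cE XE _]; apply/set0Pn; exists E.
by rewrite inE cE (setIidPr XE) cX.
Qed.

(* Lower bound on the size of the kernel system on {a, b, c}: the r-sets
   through {a, b}, plus those through {a, c} avoiding b and those through
   {b, c} avoiding a. *)
Lemma card_kernel_ge a b c : 2 <= r -> a != b -> a != c -> b != c ->
  'C(n - 2, r - 2) + 2 * 'C(n - 3, r - 2) <= #|kernel [set a; b; c]|.
Proof.
move=> r2 ab ac bc.
have cpair (x y z : 'I_n) : x != y -> x != z -> y != z ->
    #|through [set x; y] [set z] r| = 'C(n - 3, r - 2).
  move=> xy xz yz; rewrite card_through ?card_ord ?cards2 ?cards1 ?xy /=; try lia.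
    by rewrite -subnDA.
  by rewrite disjoints_subset subsetC sub1set !inE negb_or eq_sym xz eq_sym yz.
set X := [set a; b; c].
have clash (t u t' u' E : {set 'I_n}) x : E \in through t u r ->
    E \in through t' u' r -> x \in t -> x \in u' -> False.
  rewrite !inE => /and3P [_ tE _] /and3P [_ _ dE] xt xu'.
  by rewrite (disjointFr dE (subsetP tE x xt)) in xu'.
set P := through [set a; b] set0 r.
set T1 := through [set a; c] [set b] r; set T2 := through [set b; c] [set a] r.
have cP : #|P| = 'C(n - 2, r - 2).
  by rewrite card_through ?disjoint_set0 ?card_ord ?cards2 ?ab ?cards0 ?subn0.
have dT : [disjoint T1 & T2].
  rewrite disjoints_subset; apply/subsetP => E E1; rewrite in_setC; apply/negP.
  by move=> E2; apply: (clash _ _ _ _ _ a E1 E2); rewrite !inE eqxx.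
have dPT : [disjoint P & T1 :|: T2].
  rewrite disjoints_subset; apply/subsetP => E EP; rewrite in_setC in_setU.
  apply/negP => /orP [].
    by move=> E1; apply: (clash _ _ _ _ _ b EP E1); rewrite !inE eqxx ?orbT.
  by move=> E2; apply: (clash _ _ _ _ _ a EP E2); rewrite !inE eqxx.
have <- : #|P :|: (T1 :|: T2)| = 'C(n - 2, r - 2) + 2 * 'C(n - 3, r - 2).
  have [ba ca cb] : [/\ b != a, c != a & c != b] by rewrite !(eq_sym c) (eq_sym b).
  by rewrite !cardsU !disjoint_setI0 // !cards0 !subn0 cP /T1 /T2 !cpair //; lia.
have aX : a \in X by rewrite !inE eqxx.
have bX : b \in X by rewrite !inE eqxx orbT.
have cX : c \in X by rewrite !inE eqxx !orbT.
apply: subset_leq_card; apply/subsetP => E; rewrite !in_setU.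
case/or3P; rewrite inE => /and3P [/eqP cE sE _].
- by apply: (kernel_mem cE ab); rewrite subsetI sE subUset !sub1set aX bX.
- by apply: (kernel_mem cE ac); rewrite subsetI sE subUset !sub1set aX cX.
- by apply: (kernel_mem cE bc); rewrite subsetI sE subUset !sub1set bX cX.
Qed.

End KernelSystems.

(* Pascal-type comparison: since 'C(n-3, r-2) (r-2) = 'C(n-3, r-3) (n-r),
   the coefficient 'C(n-3, r-3) is smaller by a factor (n-r)/(r-2). *)
Lemma bin_ratio n r k m : 3 <= r -> r <= n -> k * (r - 2) < m * (n - r) ->
  k * 'C(n - 3, r - 3) < m * 'C(n - 3, r - 2).
Proof.
move=> r3 rn lt_km.
have step := mul_bin_left (n - 3) (r - 3).
rewrite (_ : (r - 3).+1 = r - 2) in step; last lia.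
rewrite (_ : n - 3 - (r - 3) = n - r) in step; last lia.
have pos : 0 < 'C(n - 3, r - 3) by rewrite bin_gt0; lia.
rewrite -(ltn_pmul2l (_ : 0 < r - 2)); last lia.
by rewrite [X in _ < X]mulnCA step !mulnA ltn_pmul2r // mulnC.
Qed.

Lemma size_bounds r n : 3 <= r -> r ^ 4 <= 3 * n ->
  [/\ r < n, r ^ 3 * (r - 2) < 3 * (n - r) & (r - 1) ^ 2 * (r - 2) < n - r].
Proof.
rewrite !expnS expn0 !muln1 => r3 hn.
have r9 : 9 <= r * r by apply: (@leq_mul 3 3).
have r27 : 27 * r <= r * (r * (r * r)).
  by rewrite mulnC; apply: leq_mul => //; apply: (@leq_mul 3 9).
split; nia.
Qed.

Section ExtremalHypergraph.
Variables (n r : nat) (H : {set {set 'I_n}}).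
Hypotheses (r_ge3 : 3 <= r) (n_large : r ^ 4 <= 3 * n) (unifH : uniform r H)
  (interH : intersecting H) (codegH : 2 <= min_pos_codeg r H)
  (maxH : forall H' : {set {set 'I_n}}, uniform r H' -> intersecting H' ->
            2 <= min_pos_codeg r H' -> #|H'| <= #|H|).

Lemma r_lt_n : r < n.
Proof. by case: (size_bounds r_ge3 n_large). Qed.

Lemma edge_card E : E \in H -> #|E| = r.
Proof. by move=> EH; apply/eqP/(forall_inP unifH). Qed.

Lemma edges_meet E F : E \in H -> F \in H -> exists2 x, x \in E & x \in F.
Proof.
move=> EH FH; have /set0Pn [x] := forall_inP (forall_inP interH E EH) F FH.
by rewrite inE => /andP [xE xF]; exists x.
Qed.

Lemma card_link3 (G : {set {set 'I_n}}) (t : {set 'I_n}) : G \subset H -> #|t| = 3 ->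
  #|link G t| <= 'C(n - 3, r - 3).
Proof.
move=> GH ct; rewrite -ct -[n in 'C(n - _, _)](card_ord n).
apply: card_link_uniform; last by rewrite ct.
by move=> E EG; apply: edge_card (subsetP GH E EG).
Qed.

(* By maximality, H is at least as large as the kernel system on any three
   vertices. *)
Lemma card_H_ge : 'C(n - 2, r - 2) + 2 * 'C(n - 3, r - 2) <= #|H|.
Proof.
have n3 : 2 < n by have := r_lt_n; lia.
pose a := Ordinal (ltnW (ltnW n3)); pose b := Ordinal (ltnW n3); pose c := Ordinal n3.
have [ab ac bc] : [/\ a != b, a != c & b != c] by [].
apply: leq_trans (card_kernel_ge _ ab ac bc) _; first lia.
have [] := kernel_admissible (X := [set a; b; c]) r_ge3 r_lt_n.
  exact: cards3.
exact: maxH.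
Qed.

Definition pair_covers (a b : 'I_n) := forall E, E \in H -> (a \in E) || (b \in E).

Lemma pair_covers_sym a b : pair_covers a b -> pair_covers b a.
Proof. by move=> cov E /cov; rewrite orbC. Qed.

(* Otherwise every set t of at most two
   vertices is avoided by some edge, which meets every other edge and so
   blocks the link of t; the branching bound then gives
   |H| <= r^3 'C(n-3, r-3) < 3 'C(n-3, r-2), contradicting card_H_ge. *)

Lemma pair_cover : exists a b, a != b /\ pair_covers a b.
Proof.
case: (boolP [exists p : {set 'I_n}, (#|p| == 2) && [forall E in H, ~~ [disjoint E & p]]]).
  case/existsP => p /andP [/cards2P [a [b [ab ->]]] /forall_inP cov].
  exists a, b; split => // E /cov; rewrite disjoint_sym disjoints_subset subUset.
  by rewrite !sub1set !inE negb_and !negbK.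
rewrite negb_exists => /forallP avoid.
have blocker (t : {set 'I_n}) : set0 \subset t -> #|t| < 3 ->
    exists B : {set 'I_n}, [/\ #|B| <= r, [disjoint B & t] &
      forall F, F \in H -> t \subset F -> exists2 x, x \in B & x \in F].
  move=> _ ct; have [p] : exists p, p \in through t set0 2.
    apply: (through_nonempty (disjoint_set0 t)); rewrite ?cards0 ?card_ord //.
    by have := r_lt_n; lia.
  rewrite inE => /and3P [cp tp _]; move: (avoid p); rewrite cp /= negb_forall_in.
  case/exists_inP => E EH; rewrite negbK => dEp.
  exists E; split; [by rewrite edge_card | exact: disjointWr tp dEp |].
  by move=> F FH _; apply: edges_meet.
have := link_branching blocker (fun t ct => card_link3 (subxx H) ct) (sub0set set0).
rewrite link0 cards0 subn0 => /(_ isT) small.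
have [_ lt3 _] := size_bounds r_ge3 n_large.
have := bin_ratio r_ge3 (ltnW r_lt_n) lt3.
have := @leq_bin2l (n - 3) (n - 2) (r - 2) (leq_sub2l _ (isT : 2 <= 3)).
have := card_H_ge; lia.
Qed.

(* Exchanging a out of an edge avoiding b must bring b in, since the new
   edge still meets the cover {a, b}. *)
Lemma cover_exchange a b E : pair_covers a b -> E \in H -> a \in E -> b \notin E ->
  b |: (E :\ a) \in H.
Proof.
move=> cov EH aE bE; have r_gt0 : 0 < r by lia.
have [u uE uH] := exchange r_gt0 unifH codegH EH aE.
have ua : (a == u) = false by apply/negbTE/eqP => e; rewrite -e aE in uE.
by move: (cov _ uH); rewrite !inE eqxx ua (negbTE bE) !andbF !orbF => /eqP ->.
Qed.

Definition separated (a b : 'I_n) :=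
  forall c, c != a -> c != b -> exists2 E, E \in H & [&& a \in E, b \notin E & c \notin E].

Lemma stable_or_separated a b :
  (exists c, [/\ c != a, c != b & forall E, E \in H -> a \in E -> (b \in E) || (c \in E)])
  \/ separated a b.
Proof.
case: (boolP [exists c, [&& c != a, c != b &
                          [forall E in H, (a \in E) ==> (b \in E) || (c \in E)]]]).
  case/existsP => c /and3P [ca cb /forall_inP st]; left; exists c; split => // E EH.
  exact/implyP/st.
rewrite negb_exists => /forallP ns; right => c ca cb.
move: (ns c); rewrite ca cb /= negb_forall_in => /exists_inP [E EH].
by rewrite negb_imply negb_or; exists E.
Qed.

(* Exchange transports separation of {a, b} to separation of {b, a}. *)
Lemma separated_sym a b : pair_covers a b -> separated a b -> separated b a.
Proof.
move=> cov sep c cb ca; have [E EH /and3P [aE bE cE]] := sep c ca cb.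
have ab : a != b by apply: contraNneq bE => <-.
exists (b |: (E :\ a)); first exact: cover_exchange.
by rewrite !inE !eqxx (negbTE ab) (negbTE cb) (negbTE cE) !andbF.
Qed.

(* In the stable case H lies in, hence by maximality equals, the kernel
   system on {a, b, c}. *)
Lemma stable_kernel a b c : a != b -> c != a -> c != b -> pair_covers a b ->
  (forall E, E \in H -> a \in E -> (b \in E) || (c \in E)) ->
  H = kernel r [set a; b; c].
Proof.
move=> ab ca cb cov st; have ac : a != c by rewrite eq_sym.
have bc : b != c by rewrite eq_sym.
have cX : #|[set a; b; c]| = 3 by apply: cards3.
have [K1 K2 K3] := kernel_admissible r_ge3 r_lt_n cX.
apply/eqP; rewrite eqEcard maxH // andbT; apply/subsetP => E EH.
have inK x y : x != y -> x \in E -> y \in E ->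
    x \in [set a; b; c] -> y \in [set a; b; c] -> E \in kernel r [set a; b; c].
  move=> xy xE yE xX yX; apply: (kernel_mem (edge_card EH) xy).
  by rewrite subsetI !subUset !sub1set xE yE xX yX.
have aX : a \in [set a; b; c] by rewrite !inE eqxx.
have bX : b \in [set a; b; c] by rewrite !inE eqxx orbT.
have cX' : c \in [set a; b; c] by rewrite !inE eqxx !orbT.
case aE: (a \in E); case bE: (b \in E).
- exact: inK ab _ _ aX bX.
- by have /orP [|cE] := st E EH aE; [rewrite bE | apply: inK ac _ _ aX cX'].
- have E'H := cover_exchange (pair_covers_sym cov) EH bE (negbT aE).
  have cE : c \in E.
    move: (st _ E'H (setU11 _ _)).
    by rewrite !inE eqxx (eq_sym b) (negbTE ab) (negbTE ca) cb.
  exact: inK bc _ cE bX cX'.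
- by have := cov E EH; rewrite aE bE.
Qed.

(* In the separated case the edges through a missing b are few: for t
   between {a} and a 3-set, an edge E through a missing b and the vertex of
   t other than a yields the blocking set E :\ a of size r - 1 (every such
   edge meets the exchanged edge b |: (E :\ a)), so the branching bound
   gives (r-1)^2 'C(n-3, r-3) < 'C(n-3, r-2). *)
Lemma separated_side_small a b : pair_covers a b -> separated a b ->
  #|link [set E in H | b \notin E] [set a]| < 'C(n - 3, r - 2).
Proof.
move=> cov sep; set G := [set E in H | b \notin E].
have GH : G \subset H by apply/subsetP => E; rewrite inE => /andP [].
have blocker (t : {set 'I_n}) : [set a] \subset t -> #|t| < 3 ->
    exists B : {set 'I_n}, [/\ #|B| <= r - 1, [disjoint B & t] &
      forall F, F \in G -> t \subset F -> exists2 x, x \in B & x \in F].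
  rewrite sub1set => a_t ct; case: (boolP (b \in t)) => bt.
    (* no member of G contains b, so the link of t is empty *)
    exists set0; rewrite cards0 disjoint_sym disjoint_set0; split => // F.
    by rewrite inE => /andP [_ bF] /subsetP /(_ b bt); rewrite (negbTE bF).
  have dtb : [disjoint t & [set b]] by rewrite disjoint_sym disjoints1.
  have [p] : exists p, p \in through t [set b] 2.
    by apply: (through_nonempty dtb); rewrite ?cards1 ?card_ord; have := r_lt_n; lia.
  rewrite inE => /and3P [/eqP cp tp dpb]; have ap := subsetP tp a a_t.
  have /cards1P [c pc] : #|p :\ a| == 1.
    by move: (cardsD1 a p); rewrite ap cp => /eqP; rewrite eqSS eq_sym.
  have : c \in p :\ a by rewrite pc set11.
  rewrite in_setD1 => /andP [ca cp']; have cb : c != b.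
    by apply: contraTneq cp' => ->; rewrite -disjoints1 disjoint_sym.
  have [E EH /and3P [aE bE cE]] := sep c ca cb.
  exists (E :\ a); split.
  - by move: (cardsD1 a E); rewrite aE (edge_card EH) => ->; rewrite add1n subn1.
  - apply: disjointWr tp _; rewrite -(setD1K ap) pc disjoint_sym disjoints_subset.
    by rewrite subUset !sub1set !inE eqxx (negbTE cE) andbF.
  move=> F; rewrite inE => /andP [FH bF] _.
  have [x xF] := edges_meet FH (cover_exchange cov EH aE bE).
  by rewrite in_setU1 => /orP [/eqP xb|]; [rewrite -xb xF in bF | exists x].
have := link_branching blocker (fun t ct => card_link3 GH ct) (subxx [set a]).
rewrite cards1 => /(_ isT) side; apply: leq_ltn_trans side _.
have [_ _ lt1] := size_bounds r_ge3 n_large.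
have lt1' : (r - 1) ^ 2 * (r - 2) < 1 * (n - r) by rewrite mul1n.
by have := bin_ratio r_ge3 (ltnW r_lt_n) lt1'; rewrite mul1n.
Qed.

(* With a cover {a, b}, every edge contains both a and b, or exactly one of
   them; so H is covered by the link of {a, b} and the two one-sided links. *)
Lemma card_H_covered a b : a != b -> pair_covers a b ->
  #|H| <= 'C(n - 2, r - 2) + #|link [set E in H | b \notin E] [set a]|
                          + #|link [set E in H | a \notin E] [set b]|.
Proof.
move=> ab cov.
have two : #|link H [set a; b]| <= 'C(n - 2, r - 2).
  have := @card_link_uniform _ H [set a; b] r edge_card; rewrite cards2 ab card_ord.
  by apply; lia.
apply: leq_trans (leq_add (leq_add two (leqnn _)) (leqnn _)).
apply: leq_trans (leq_add (leq_card_setU _ _).1 (leqnn _)).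
apply: leq_trans (leq_card_setU _ _).1; apply/subset_leq_card/subsetP => E EH.
rewrite !in_setU !inE EH subUset !sub1set /=.
by case: (a \in E) (b \in E) (cov E EH) => [] [].
Qed.

Lemma extremal_is_kernel : kernel_system r 2 H.
Proof.
have [a [b [ab cov]]] := pair_cover.
have [[c [ca cb st]] | sep] := stable_or_separated a b.
  exists [set a; b; c]; split; first by apply: cards3; rewrite // eq_sym.
  exact: stable_kernel.
have small_a := separated_side_small cov sep.
have small_b := separated_side_small (pair_covers_sym cov) (separated_sym cov sep).
have := leq_trans card_H_ge (card_H_covered ab cov).
rewrite -addnA leq_add2l mul2n -addnn leqNgt.
by rewrite -addSn (leq_add small_a (ltnW small_b)).
Qed.

End ExtremalHypergraph.

Unset Implicit Arguments.

Theorem proposition6 (r n : nat) (H : {set {set 'I_n}}) :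
  3 <= r -> r ^ 4 <= 3 * n ->
  uniform r H -> intersecting H -> 2 <= min_pos_codeg r H ->
  (forall H' : {set {set 'I_n}},
     uniform r H' -> intersecting H' -> 2 <= min_pos_codeg r H' ->
     #|H'| <= #|H|) ->
  kernel_system r 2 H.
Proof. exact: extremal_is_kernel. Qed.
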